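(* Let $M_{c,2}$ be the set of positive integers $n$ such that $g(n)-\gamma_c(X_n)\ge 2$. Then the set $\omega(M_{c,2})=\{\omega(n): n\in M_{c,2}\}$ is unbounded; that is, for every $N$ there is $n\in M_{c,2}$ with more than $N$ distinct prime factors.
   Context: For a positive integer $n$, the unitary Cayley graph $X_n$ is the graph on vertex set $\{0,1,\dots,n-1\}$ in which $a$ and $b$ are adjacent if and only if $\gcd(a-b,n)=1$. The Jacobsthal function $g(n)$ is the least positive integer $m$ such that every set of $m$ consecutive integers contains an integer coprime to $n$. A set $S$ of vertices of a graph is dominating if every vertex is in $S$ or adjacent to a vertex of $S$. A dominating cycle is a cycle in the graph whose vertex set is a dominating set; the cycle domination number $\gamma_c(G)$ is the minimum number of vertices of a dominating cycle of $G$ (for $X_n$ such a cycle always exists, e.g. $(0,1,\dots,n-1)$). $\omega(n)$ denotes the number of distinct prime factors of $n$. *)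

From HB Require Import structures.
From mathcomp Require Import all_boot all_order all_algebra.
From Stdlib Require Import ClassicalEpsilon.
Set Implicit Arguments. Unset Strict Implicit. Unset Printing Implicit Defensive.
Import Order.TTheory GRing.Theory Num.Theory.

Definition pbool (P : Prop) : bool :=
  if excluded_middle_informative P then true else false.

Definition ucay_vertex (n v : nat) : bool := v < n.
Definition ucay_adj (n : nat) (a b : nat) : bool :=
  (a != b) && coprimez (a%:Z - b%:Z)%R n%:Z.

Definition ucay_cycle (n : nat) (s : seq nat) : Prop :=
  [/\ all (ucay_vertex n) s, uniq s, 3 <= size s & cycle (ucay_adj n) s].

Definition ucay_dominating (n : nat) (S : seq nat) : Prop :=
  forall v, v < n -> v \in S \/ exists2 u, u \in S & ucay_adj n u v.

Definition has_dom_cycle_of_size (n k : nat) : Prop :=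
  exists s, [/\ ucay_cycle n s, ucay_dominating n s & size s = k].

(* cycle domination number gamma_c(X_n) (0 if X_n has no dominating cycle) *)
Definition gamma_c (n : nat) : nat :=
  match excluded_middle_informative
          (exists k, pbool (has_dom_cycle_of_size n k)) with
  | left h => ex_minn h
  | right _ => 0
  end.

(* Jacobsthal function: least m >= 1 such that every m consecutive integers
   contain one coprime to n (0 if no such m, i.e. n = 0). *)
Definition jac_ok (n m : nat) : Prop :=
  0 < m /\ forall a : int, exists2 i : nat, i < m & coprimez (a + i%:Z)%R n%:Z.

Definition jacobsthal (n : nat) : nat :=
  match excluded_middle_informative (exists m, pbool (jac_ok n m)) with
  | left h => ex_minn h
  | right _ => 0
  end.

Definition omega (n : nat) : nat := size (primes n).

From HB Require Import structures.
From mathcomp Require Import all_boot all_order all_algebra zify.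
From Stdlib Require Import ClassicalEpsilon.
Set Implicit Arguments.
Unset Strict Implicit.
Unset Printing Implicit Defensive.
Import Order.TTheory GRing.Theory Num.Theory.

(* Fix k, put F := (30k+36)! and, for every j in [20, 30k+37) coprime to 30, pick
   a prime q_j > 30k+36 dividing F^2 + j; let n := 30 * prod_j q_j.  Since 30 divides
   F^2, each of the 30k+17 consecutive integers F^2 + 20, ..., F^2 + 30k+36 shares
   the factor 2, 3, 5 or q_j with n, hence g(n) >= 30k+18.  The window starts at 20
   because [20, 37) contains only 3 units mod 30, so there are only 8k+3 primes q_j
   (and omega(n) >= 8k+3).
   Among the vertices 0 .. 30k+29 adjacency only depends on the residues mod 30,
   and a cycle through 30k+16 of them exists.  Every vertex v has at least 8k+4
   cycle vertices s with s - v a unit mod 30; a prime q_j larger than all of them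
   divides s - v for at most one such s, so some s is adjacent to v.  Hence this
   cycle dominates and gamma_c(n) <= 30k+16. *)

Lemma pboolP (P : Prop) : reflect P (pbool P).
Proof. by rewrite /pbool; case: excluded_middle_informative => h; constructor. Qed.

Lemma coprimez_eqmod (x y d : int) :
  (x = y %[mod d])%Z -> coprimez x d = coprimez y d.
Proof. by move=> xy; rewrite /coprimez -gcdz_modl xy gcdz_modl. Qed.

Lemma coprime_dvdDl d x j : d %| x -> coprime (x + j) d = coprime j d.
Proof. by move=> /dvdnP[t ->]; rewrite -coprime_modl modnMDl coprime_modl. Qed.

Lemma path_iota (e : rel nat) m n : (forall i, e i i.+1) -> path e m (iota m.+1 n).
Proof. by move=> e_succ; elim: n m => //= n IH m; rewrite e_succ IH. Qed.

Lemma count_iota_periodic (P : pred nat) d k :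
  (forall s, P (s + d) = P s) -> count P (iota 0 (d * k)) = k * count P (iota 0 d).
Proof.
move=> P_per; have P_perM j s : P (d * j + s) = P s.
  by elim: j => [|j IH]; rewrite ?muln0 // mulnS -addnA addnC P_per.
elim: k => [|k IH]; first by rewrite muln0.
rewrite mulnSr iotaD count_cat IH add0n -[d * k]addn0 iotaDl count_map mulSn addnC.
by congr (_ + _); apply: eq_count => s /=; rewrite P_perM.
Qed.

Lemma leq_size_mod_cover (ps C : seq nat) v :
  uniq C -> {in C & ps, forall s p, s < p} ->
  {in C, forall s, has (fun p => s == v %[mod p]) ps} -> size C <= size ps.
Proof.
move=> C_uniq C_small C_cover.
pose f s := nth 0 ps (find (fun p => s == v %[mod p]) ps).
have f_ps s : s \in C -> f s \in ps by move=> /C_cover; rewrite has_find; apply: mem_nth.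
have f_mod s : s \in C -> s == v %[mod f s] by move=> /C_cover /(nth_find 0).
have f_inj : {in C &, injective f}.
  move=> s s' sC s'C fs_eq; have := f_mod s sC; rewrite fs_eq -(eqP (f_mod s' s'C)).
  by rewrite !modn_small ?C_small ?f_ps // -?fs_eq => /eqP.
rewrite -(size_map f); apply: uniq_leq_size; first by rewrite map_inj_in_uniq.
by move=> _ /mapP[s sC ->]; apply: f_ps.
Qed.

Lemma jac_ok_self n : 0 < n -> jac_ok n n.
Proof.
move=> n_gt0; split=> // a.
have n_neq0 : (n%:Z != 0)%R by rewrite eqz_nat -lt0n.
set r := ((1 - a) %% n%:Z)%Z.
have r_ge0 : (0 <= r)%R by apply: modz_ge0.
have r_lt_n : (r < n%:Z)%R by apply: ltz_pmod; rewrite ltz_nat.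
exists `|r|%N; first by lia.
rewrite gez0_abs // (@coprimez_eqmod _ 1).
- by rewrite coprimezE coprime1n.
- by rewrite /r modzDmr addrC subrK.
Qed.

Lemma jacobsthal_gt n (a : int) M : 0 < n ->
  (forall i, i < M -> ~~ coprimez (a + i%:Z) n%:Z) -> M < jacobsthal n.
Proof.
move=> n_gt0 blocked; rewrite /jacobsthal.
case: excluded_middle_informative => [ex|]; last by case; exists n; apply/pboolP/jac_ok_self.
case: ex_minnP => m /pboolP [_ hit] _.
rewrite ltnNge; apply/negP => m_le_M; have [i i_lt_m] := hit a.
exact/negP/blocked/(leq_trans i_lt_m).
Qed.

Lemma gamma_c_le n k : has_dom_cycle_of_size n k -> gamma_c n <= k.
Proof.
move=> dom_k; rewrite /gamma_c.
case: excluded_middle_informative => [ex|]; last by case; exists k; apply/pboolP.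
by case: ex_minnP => m _; apply; apply/pboolP.
Qed.

Definition coprime_diff (d a b : nat) : bool := coprimez (a%:Z - b%:Z)%R d%:Z.

Lemma ucay_adjE n a b : ucay_adj n a b = (a != b) && coprime_diff n a b.
Proof. by []. Qed.

Lemma coprime_diff_mod d a b : coprime_diff d (a %% d) (b %% d) = coprime_diff d a b.
Proof.
apply: coprimez_eqmod.
by rewrite -!modz_nat modzDml -modzDmr modzNm modzDmr.
Qed.

Lemma coprime_diff_modr d a b : coprime_diff d a (b %% d) = coprime_diff d a b.
Proof. by rewrite -coprime_diff_mod modn_mod coprime_diff_mod. Qed.

Lemma coprime_diff_addMl d k a b : coprime_diff d (d * k + a) b = coprime_diff d a b.
Proof. by rewrite -coprime_diff_mod mulnC modnMDl coprime_diff_mod. Qed.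

Lemma coprime_diff_add2l d c a b : coprime_diff d (c + a) (c + b) = coprime_diff d a b.
Proof. by rewrite /coprime_diff !PoszD opprD addrACA subrr add0r. Qed.

Lemma coprime_diffMr d e a b :
  coprime_diff (d * e) a b = coprime_diff d a b && coprime_diff e a b.
Proof. by rewrite /coprime_diff PoszM coprimezMr. Qed.

Lemma coprime_diffnn d a : d != 1 -> coprime_diff d a a = false.
Proof.
by move=> /negbTE d_neq1; rewrite /coprime_diff subrr coprimezE absz_nat /coprime gcd0n.
Qed.

Lemma coprime_diff_prime p a b : prime p -> coprime_diff p a b = (a != b %[mod p]).
Proof.
move=> p_prime; rewrite /coprime_diff coprimezE absz_nat coprime_sym prime_coprime //.
by rewrite -[p in p %| _]absz_nat -dvdzE -eqz_mod_dvd !modz_nat eqz_nat.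
Qed.

Lemma coprime_diff_prod ps a b :
  coprime_diff (\prod_(p <- ps) p) a b = all (fun p => coprime_diff p a b) ps.
Proof.
elim: ps => [|p ps IH].
  by rewrite big_nil /coprime_diff coprimezE absz_nat coprimen1.
by rewrite big_cons coprime_diffMr IH.
Qed.

(* [m`! * m`! + j = j * (1 + m`! * (m`! %/ j))], and the second factor is coprime
   to [m`!], so its least prime divisor exceeds [m]. *)
Definition fact_shift_prime (m j : nat) : nat := pdiv (1 + m`! * (m`! %/ j)).

Lemma fact_shift_primeP m j : 0 < j <= m ->
  [/\ prime (fact_shift_prime m j), m < fact_shift_prime m j
    & fact_shift_prime m j %| m`! * m`! + j].
Proof.
case/andP=> j_gt0 j_le_m; rewrite /fact_shift_prime.
set F := m`!; set x := 1 + F * (F %/ j).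
have j_dvd_F : j %| F by apply: dvdn_fact; rewrite j_gt0.
have x_gt1 : 1 < x.
  have : 0 < F * (F %/ j) by rewrite muln_gt0 fact_gt0 divn_gt0 // dvdn_leq ?fact_gt0.
  by rewrite /x; lia.
have q_prime := pdiv_prime x_gt1; set q := pdiv x in q_prime *.
split=> //.
- rewrite ltnNge; apply/negP => q_le_m.
  have q_dvd_F : q %| F by rewrite dvdn_fact ?prime_gt0.
  have := pdiv_dvd x; rewrite -/q /x dvdn_addl ?dvdn_mulr // dvdn1 => /eqP q1.
  by rewrite q1 in q_prime.
- have -> : F * F + j = j * x.
    by rewrite /x mulnDr muln1 addnC mulnCA [j * _]mulnC divnK.
  exact/dvdn_mull/pdiv_dvd.
Qed.

Lemma fact_shift_prime_inj m :
  {in [pred j | 0 < j <= m] &, injective (fact_shift_prime m)}.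
Proof.
move=> j j' j_range j'_range eq_q.
have [_ m_lt_q] := fact_shift_primeP j_range; rewrite /dvdn => /eqP dvd_j.
have [_ _] := fact_shift_primeP j'_range; rewrite -eq_q /dvdn => /eqP dvd_j'.
have : m`! * m`! + j == m`! * m`! + j' %[mod fact_shift_prime m j].
  by rewrite dvd_j dvd_j'.
rewrite eqn_modDl !modn_small => [/eqP //||]; apply: leq_ltn_trans m_lt_q.
- by case/andP: j'_range.
- by case/andP: j_range.
Qed.

Definition cycle_tail : seq nat :=
  [:: 0; 1; 12; 23; 10; 21; 14; 7; 18; 25; 26; 27; 28; 15; 22; 29].

Lemma cycle_tail_cycle : cycle (coprime_diff 30) cycle_tail.
Proof. by vm_compute. Qed.

Lemma count_coprime_diff_period v : count (coprime_diff 30 ^~ v) (iota 0 30) = 8.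
Proof.
rewrite -(eq_count (fun s => coprime_diff_modr 30 s v)).
have : all (fun r => count (coprime_diff 30 ^~ r) (iota 0 30) == 8) (iota 0 30).
  by vm_compute.
by move=> /allP /(_ (v %% 30)); rewrite mem_iota ltn_mod => /(_ isT) /eqP.
Qed.

Lemma count_coprime_diff_tail v : 4 <= count (coprime_diff 30 ^~ v) cycle_tail.
Proof.
rewrite -(eq_count (fun s => coprime_diff_modr 30 s v)).
have : all (fun r => 4 <= count (coprime_diff 30 ^~ r) cycle_tail) (iota 0 30).
  by vm_compute.
by move=> /allP /(_ (v %% 30)); rewrite mem_iota ltn_mod; apply.
Qed.

Lemma count_coprime30_head : count (coprime ^~ 30) (iota 20 17) = 3.
Proof. by vm_compute. Qed.

Lemma count_coprime30_period : count (fun s => coprime (37 + s) 30) (iota 0 30) = 8.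
Proof. by vm_compute. Qed.

Section Witness.

Variable k : nat.

Definition unit_offsets : seq nat := [seq j <- iota 20 (30 * k + 17) | coprime j 30].

Definition blocking_primes : seq nat := map (fact_shift_prime (30 * k + 36)) unit_offsets.

Definition gap_witness : nat := 30 * \prod_(p <- blocking_primes) p.

Definition gap_cycle : seq nat := iota 0 (30 * k) ++ map (addn (30 * k)) cycle_tail.

Lemma mem_unit_offsets j : j \in unit_offsets -> 0 < j <= 30 * k + 36.
Proof. by rewrite mem_filter mem_iota => /andP[_ /andP[? ?]]; apply/andP; split; lia. Qed.

Lemma size_unit_offsets : size unit_offsets = 8 * k + 3.
Proof.
rewrite size_filter [30 * k + 17]addnC (iotaD 20 17) -[20 + 17]/(37 + 0) iotaDl.
rewrite count_cat count_map count_coprime30_head addnC.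
congr (_ + _); rewrite (@count_iota_periodic _ 30) ?count_coprime30_period 1?mulnC //.
by move=> s /=; rewrite addnA -coprime_modl modnDr coprime_modl.
Qed.

Lemma blocking_primesP p : p \in blocking_primes -> prime p /\ 30 * k + 36 < p.
Proof. by case/mapP=> j /mem_unit_offsets /fact_shift_primeP[? ? _] ->. Qed.

Lemma uniq_blocking_primes : uniq blocking_primes.
Proof.
rewrite map_inj_in_uniq ?filter_uniq ?iota_uniq //.
by apply: sub_in2 (@fact_shift_prime_inj (30 * k + 36)) => j /mem_unit_offsets.
Qed.

Lemma size_blocking_primes : size blocking_primes = 8 * k + 3.
Proof. by rewrite size_map size_unit_offsets. Qed.

Lemma dvdn_blocking_primes_gap_witness p : p \in blocking_primes -> p %| gap_witness.
Proof. by move=> p_in; rewrite /gap_witness dvdn_mull // (big_rem p) //= dvdn_mulr. Qed.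

Lemma gap_witness_gt0 : 0 < gap_witness.
Proof.
rewrite /gap_witness muln_gt0 /= big_seq prodn_cond_gt0 // => p.
by case/blocking_primesP=> /prime_gt0.
Qed.

Lemma gap_witness_gt : 30 * k + 36 < gap_witness.
Proof.
have p_in : fact_shift_prime (30 * k + 36) 23 \in blocking_primes.
  by apply: map_f; rewrite mem_filter mem_iota /=; lia.
have [_ p_gt] := blocking_primesP p_in.
exact: leq_trans p_gt (dvdn_leq gap_witness_gt0 (dvdn_blocking_primes_gap_witness p_in)).
Qed.

Lemma coprime_diff_gap_witness a b : coprime_diff gap_witness a b =
  coprime_diff 30 a b && all (fun p => a != b %[mod p]) blocking_primes.
Proof.
rewrite coprime_diffMr coprime_diff_prod; congr (_ && _).
by apply: eq_in_all => p /blocking_primesP[p_prime _]; rewrite coprime_diff_prime.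
Qed.

Lemma ucay_adj_gap_witness_small a b : a <= 30 * k + 36 -> b <= 30 * k + 36 ->
  ucay_adj gap_witness a b = coprime_diff 30 a b.
Proof.
move=> a_small b_small; rewrite ucay_adjE coprime_diff_gap_witness.
have [->|a_neq_b] := eqVneq a b; first by rewrite coprime_diffnn.
suff -> : all (fun p => a != b %[mod p]) blocking_primes by rewrite andbT.
apply/allP => p /blocking_primesP[_ p_big].
by rewrite !modn_small ?(leq_ltn_trans _ p_big).
Qed.

Lemma jacobsthal_gap_witness : 30 * k + 18 <= jacobsthal gap_witness.
Proof.
set F := (30 * k + 36)`!; rewrite addnS.
apply: (@jacobsthal_gt _ (F * F + 20)%:Z) => [|i lt_i]; first exact: gap_witness_gt0.
rewrite -PoszD coprimezE !absz_nat -addnA; set j := 20 + i.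
have j_range : 0 < j <= 30 * k + 36 by rewrite /j; lia.
have [j_unit|j_nonunit] := boolP (coprime j 30).
- have [q_prime _ q_dvd] := fact_shift_primeP j_range.
  have q_in : fact_shift_prime (30 * k + 36) j \in blocking_primes.
    by apply: map_f; rewrite mem_filter j_unit mem_iota /j; lia.
  apply: contraL q_dvd => /(coprime_dvdr (dvdn_blocking_primes_gap_witness q_in)).
  by rewrite coprime_sym prime_coprime.
- apply: contra j_nonunit => /(coprime_dvdr (dvdn_mulr _ (dvdnn 30))).
  by rewrite coprime_dvdDl // dvdn_mulr // dvdn_fact //; lia.
Qed.

Lemma mem_gap_cycle s : s \in gap_cycle -> s < 30 * k + 30.
Proof.
rewrite mem_cat mem_iota => /orP[|/mapP[t t_in ->]]; first lia.
have /allP/(_ t t_in) : all (fun t => t < 30) cycle_tail by [].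
by rewrite ltn_add2l.
Qed.

Lemma uniq_gap_cycle : uniq gap_cycle.
Proof.
rewrite cat_uniq iota_uniq map_inj_uniq; last exact: addnI.
apply/and3P; split=> //; apply/hasPn => _ /mapP[t _ ->].
by rewrite mem_iota add0n ltnNge leq_addr.
Qed.

Lemma size_gap_cycle : size gap_cycle = 30 * k + 16.
Proof. by rewrite size_cat size_iota size_map. Qed.

Lemma cycle_coprime_diff_gap_cycle : cycle (coprime_diff 30) gap_cycle.
Proof.
set M := 30 * k.
have shift_invariant : relpre (addn M) (coprime_diff 30) =2 coprime_diff 30.
  by move=> a b; apply: coprime_diff_add2l.
rewrite /gap_cycle -(rot_cycle (size (iota 0 M))) rot_size_cat.
have -> : map (addn M) cycle_tail = M + 0 :: map (addn M) (behead cycle_tail) by [].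
set tail' := behead cycle_tail.
have : path (coprime_diff 30) 0 (rcons tail' 0) := cycle_tail_cycle.
rewrite rcons_path (_ : last 0 tail' = 29) // => /andP[tail'_path tail_closes].
change (path (coprime_diff 30) (M + 0)
  (rcons (map (addn M) tail' ++ iota 0 M) (M + 0))).
rewrite rcons_cat cat_path last_map path_map (eq_path shift_invariant) tail'_path /=.
rewrite addn0 -cats1 -[[:: M]]/(iota (0 + M) 1) -iotaD addn1 /=.
rewrite coprime_diff_addMl tail_closes /=.
apply: path_iota => i.
by rewrite /coprime_diff -addn1 PoszD opprD addrA subrr add0r coprimeNz.
Qed.

Lemma ucay_cycle_gap_cycle : ucay_cycle gap_witness gap_cycle.
Proof.
have small s : s \in gap_cycle -> s <= 30 * k + 36.
  by move=> /mem_gap_cycle; lia.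
split; [|exact: uniq_gap_cycle|by rewrite size_gap_cycle; lia|].
- by apply/allP => s /small s_small; apply: leq_ltn_trans gap_witness_gt.
- apply: (sub_in_cycle _ (introT allP small) cycle_coprime_diff_gap_cycle).
  by move=> a b a_small b_small; rewrite ucay_adj_gap_witness_small.
Qed.

Lemma count_coprime_diff_gap_cycle v :
  8 * k + 4 <= count (coprime_diff 30 ^~ v) gap_cycle.
Proof.
rewrite count_cat (@count_iota_periodic _ 30); last first.
  by move=> s; rewrite -coprime_diff_mod modnDr coprime_diff_mod.
rewrite count_coprime_diff_period count_map mulnC leq_add2l.
rewrite (eq_count (a2 := coprime_diff 30 ^~ v)) ?count_coprime_diff_tail //.
by move=> t /=; rewrite coprime_diff_addMl.
Qed.

Lemma dominating_gap_cycle : ucay_dominating gap_witness gap_cycle.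
Proof.
move=> v _; right; apply/(@hasP _ (ucay_adj gap_witness ^~ v)); apply: contraT => no_nbr.
set C := [seq s <- gap_cycle | coprime_diff 30 s v].
have : size C <= size blocking_primes.
  apply: (@leq_size_mod_cover _ _ v); first by rewrite filter_uniq ?uniq_gap_cycle.
    move=> s p; rewrite mem_filter => /andP[_ /mem_gap_cycle s_small].
    by case/blocking_primesP=> _; apply: leq_trans; lia.
  move=> s; rewrite mem_filter => /andP[s_unit s_in].
  have : ~~ ucay_adj gap_witness s v by apply: contra no_nbr => adj; apply/hasP; exists s.
  have s_neq_v : s != v by apply: contraTneq s_unit => ->; rewrite coprime_diffnn.
  rewrite ucay_adjE coprime_diff_gap_witness s_unit s_neq_v /=.
  by move=> /allPn[p p_in /negPn s_mod]; apply/hasP; exists p.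
by rewrite size_filter size_blocking_primes; have := count_coprime_diff_gap_cycle v; lia.
Qed.

Lemma gamma_c_gap_witness : gamma_c gap_witness <= 30 * k + 16.
Proof.
apply: gamma_c_le; exists gap_cycle; split.
- exact: ucay_cycle_gap_cycle.
- exact: dominating_gap_cycle.
- exact: size_gap_cycle.
Qed.

Lemma omega_gap_witness : 8 * k + 3 <= omega gap_witness.
Proof.
rewrite /omega -size_blocking_primes; apply: uniq_leq_size uniq_blocking_primes _ => p p_in.
have [p_prime _] := blocking_primesP p_in.
by rewrite mem_primes p_prime gap_witness_gt0 dvdn_blocking_primes_gap_witness.
Qed.

End Witness.

Theorem theorem3p1 :
  forall N : nat, exists n : nat,
    [/\ 0 < n, gamma_c n + 2 <= jacobsthal n & N < omega n].
Proof.
move=> N; exists (gap_witness N); split; first exact: gap_witness_gt0.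
- by have := gamma_c_gap_witness N; have := jacobsthal_gap_witness N; lia.
- by have := omega_gap_witness N; lia.
Qed.
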